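(* Let $S_\omega$ be the group of all permutations of $\omega$ and let $\mathcal{E}$ be the coarse structure on $\omega$ with base $\{E_H: H\subseteq S_\omega \text{ finite}, \ \mathrm{id}\in H\}$, where $E_H=\{(x,y): y\in Hx\}$. Then $(\omega,\mathcal{E})$ is extremely normal (every infinite subset of $\omega$ is large), $\mathcal{E}$ is strictly contained in $\mathfrak{M}_\omega$, and $(\omega,\mathcal{E})$ is not maximal.
   Context: A ballean $(X,\mathcal{E})$ is a set with a coarse structure. $E[x]=\{y:(x,y)\in E\}$, $E[A]=\bigcup_{a\in A}E[a]$. $Y$ is bounded if $Y\subseteq E[x]$ for some $x$ and $E\in\mathcal{E}$. $A$ is large if $X=E[A]$ for some $E$. An unbounded ballean is extremely normal if every unbounded subset is large, and maximal if $X$ is bounded in every coarse structure strictly containing $\mathcal{E}$. $\mathfrak{M}_\omega$ is the coarse structure on $\omega$ with base $\{M_{\mathcal{P}}:\mathcal{P}\in\mathfrak{F}\}$, where $\mathfrak{F}$ is the family of coverings $\mathcal{P}$ of $\omega$ such that every $P\in\mathcal{P}$ is finite and for every $x\in\omega$ the set $\bigcup\{P'\in\mathcal{P}: x\in P'\}$ is finite, and $M_{\mathcal{P}}=\{(x,y): x,y\in P \text{ for some } P\in\mathcal{P}\}$. *)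

From Stdlib Require Import List.

Definition entourage (X : Type) := X -> X -> Prop.
Definition family (X : Type) := entourage X -> Prop.

Definition ball {X : Type} (E : entourage X) (x : X) : X -> Prop := fun y => E x y.
Definition ballS {X : Type} (E : entourage X) (A : X -> Prop) : X -> Prop :=
  fun y => exists a, A a /\ E a y.

Definition subrel {X : Type} (E F : entourage X) : Prop := forall x y, E x y -> F x y.

Definition coarse_structure {X : Type} (C : family X) : Prop :=
  C (fun x y => x = y) /\
  (forall E F, C F -> subrel E F -> C E) /\
  (forall E, C E -> C (fun x y => E y x)) /\
  (forall E F, C E -> C F -> C (fun x y => E x y \/ F x y)) /\
  (forall E F, C E -> C F -> C (fun x z => exists y, E x y /\ F y z)).

Definition with_base {X : Type} (B : family X) : family X :=
  fun E => exists F, B F /\ subrel E F.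

Definition bounded {X : Type} (C : family X) (Y : X -> Prop) : Prop :=
  exists x E, C E /\ forall y, Y y -> ball E x y.

Definition large {X : Type} (C : family X) (A : X -> Prop) : Prop :=
  exists E, C E /\ forall y, ballS E A y.

Definition unbounded_ballean {X : Type} (C : family X) : Prop :=
  ~ bounded C (fun _ => True).

Definition extremely_normal {X : Type} (C : family X) : Prop :=
  unbounded_ballean C /\ forall Y, ~ bounded C Y -> large C Y.

Definition strictly_contained {X : Type} (C D : family X) : Prop :=
  (forall E, C E -> D E) /\ exists E, D E /\ ~ C E.

Definition maximal {X : Type} (C : family X) : Prop :=
  unbounded_ballean C /\
  forall D, coarse_structure D -> strictly_contained C D -> bounded D (fun _ => True).

Definition finite_set (A : nat -> Prop) : Prop := exists n, forall x, A x -> x < n.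
Definition infinite_set (A : nat -> Prop) : Prop := ~ finite_set A.

Definition bijective_fun (f : nat -> nat) : Prop :=
  exists g, (forall x, g (f x) = x) /\ (forall y, f (g y) = y).

Definition finite_perm_set (H : (nat -> nat) -> Prop) : Prop :=
  (exists l : list (nat -> nat), forall h, H h <-> In h l) /\
  (forall h, H h -> bijective_fun h) /\
  H (fun x => x).

Definition E_H (H : (nat -> nat) -> Prop) : entourage nat :=
  fun x y => exists h, H h /\ y = h x.

Definition perm_base : family nat :=
  fun E => exists H, finite_perm_set H /\ E = E_H H.

Definition perm_coarse : family nat := with_base perm_base.

Definition in_frakF (P : (nat -> Prop) -> Prop) : Prop :=
  (forall x, exists Q, P Q /\ Q x) /\
  (forall Q, P Q -> finite_set Q) /\
  (forall x, finite_set (fun y => exists Q, P Q /\ Q x /\ Q y)).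

Definition M_P (P : (nat -> Prop) -> Prop) : entourage nat :=
  fun x y => exists Q, P Q /\ Q x /\ Q y.

Definition M_base : family nat :=
  fun E => exists P, in_frakF P /\ E = M_P P.

Definition M_omega : family nat := with_base M_base.

From Stdlib Require Import ClassicalEpsilon Classical List Lia PeanoNat.

(* Every entourage E_H has balls and co-balls of at most |H| points, so the
   structure consists of locally finite relations, all of which lie in M_omega.
   The relation "x and y lie in the same dyadic block [2^k - 1, 2^(k+1) - 1)" is
   locally finite but has arbitrarily large balls, so it is in M_omega but not in
   the structure; the locally finite relations form a strictly larger coarse
   structure in which omega is still unbounded, so the structure is not maximal.
   An infinite set A is large: for an injection psi of omega into A, the
   involution exchanging n and psi n for every n outside A moves each point
   outside A into A.  A finite set is bounded, using the transpositions with 0. *)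

Local Notation E_of l := (E_H (fun g => In g l)).

Definition bijections (l : list (nat -> nat)) : Prop :=
  forall h, In h l -> bijective_fun h.

Definition locally_finite : family nat :=
  fun E => (forall x, finite_set (E x)) /\ (forall x, finite_set (fun y => E y x)).

Lemma finite_set_or (A B : nat -> Prop) :
  finite_set A -> finite_set B -> finite_set (fun y => A y \/ B y).
Proof.
  intros [n Hn] [m Hm]. exists (max n m).
  intros y [Ay|By]; [specialize (Hn y Ay)|specialize (Hm y By)]; lia.
Qed.

Lemma finite_set_indexed_union (I : nat -> Prop) (F : nat -> nat -> Prop) :
  finite_set I -> (forall z, I z -> finite_set (F z)) ->
  finite_set (fun y => exists z, I z /\ F z y).
Proof.
  intros [n Hn] HF.
  enough (Hk : forall k, finite_set (fun y => exists z, z < k /\ I z /\ F z y)).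
  { destruct (Hk n) as [m Hm]. exists m. intros y [z [Iz Fzy]].
    apply Hm. exists z. auto. }
  induction k as [|k [m Hm]].
  - exists 0. intros y [z [Hz _]]. lia.
  - destruct (classic (I k)) as [Ik|nIk].
    + destruct (HF k Ik) as [m' Hm']. exists (max m m').
      intros y [z [Hz [Iz Fzy]]].
      destruct (Nat.eq_dec z k) as [->|Hzk].
      * specialize (Hm' y Fzy); lia.
      * assert (y < m) by (apply Hm; exists z; repeat split; auto; lia). lia.
    + exists m. intros y [z [Hz [Iz Fzy]]].
      apply Hm. exists z. repeat split; auto.
      destruct (Nat.eq_dec z k); [subst; contradiction|lia].
Qed.

Lemma locally_finite_coarse_structure : coarse_structure locally_finite.
Proof.
  split; [|split; [|split; [|split]]].
  - split; intro x; exists (S x); intros y Hy; lia.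
  - intros E F [HF1 HF2] HEF. split; intro x.
    + destruct (HF1 x) as [n Hn]. exists n. intros y Hy. apply Hn, HEF, Hy.
    + destruct (HF2 x) as [n Hn]. exists n. intros y Hy. apply Hn, HEF, Hy.
  - intros E [HE1 HE2]. split; assumption.
  - intros E F [HE1 HE2] [HF1 HF2]. split; intro x; apply finite_set_or; auto.
  - intros E F [HE1 HE2] [HF1 HF2]. split; intro x.
    + apply (finite_set_indexed_union (E x) F); auto.
    + destruct (finite_set_indexed_union (fun y => F y x) (fun y z => E z y))
        as [n Hn]; auto.
      exists n. intros z [y [Ezy Fyx]]. apply Hn. eauto.
Qed.

Lemma locally_finite_unbounded : unbounded_ballean locally_finite.
Proof.
  intros [x [E [[HE _] Hall]]].
  destruct (HE x) as [n Hn]. specialize (Hn n (Hall n I)). lia.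
Qed.

(* The covering by the sets {z} \cup E[z]. *)
Lemma locally_finite_M_omega (E : entourage nat) : locally_finite E -> M_omega E.
Proof.
  intros [HE1 HE2].
  set (Q := fun z y => y = z \/ E z y).
  assert (HQ : forall z, finite_set (Q z)).
  { intro z. apply finite_set_or; [exists (S z); intros y ->; lia|apply HE1]. }
  set (P := fun S : nat -> Prop => exists z, S = Q z).
  exists (M_P P). split.
  - exists P. split; [|reflexivity]. split; [|split].
    + intro x. exists (Q x). split; [exists x; reflexivity|left; reflexivity].
    + intros S [z ->]. apply HQ.
    + intro x.
      destruct (finite_set_indexed_union (fun z => Q z x) Q) as [n Hn]; auto.
      { destruct (HE2 x) as [m Hm]. exists (max (S x) m).
        intros z [->|Ezx]; [lia|specialize (Hm z Ezx); lia]. }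
      exists n. intros y [S [[z ->] [Hx Hy]]]. apply Hn. eauto.
  - intros x y Exy. exists (Q x).
    split; [exists x; reflexivity|split; [left; reflexivity|right; exact Exy]].
Qed.

Lemma bijective_fun_id : bijective_fun (fun x => x).
Proof. exists (fun x => x). split; reflexivity. Qed.

Lemma bijective_fun_comp (f g : nat -> nat) :
  bijective_fun f -> bijective_fun g -> bijective_fun (fun x => g (f x)).
Proof.
  intros [f' [Hf1 Hf2]] [g' [Hg1 Hg2]]. exists (fun y => f' (g' y)).
  split; intro; [rewrite Hg1, Hf1|rewrite Hf2, Hg2]; reflexivity.
Qed.

Lemma bijections_inverses (l : list (nat -> nat)) :
  bijections l ->
  exists l', bijections l' /\
    forall h, In h l -> exists g, In g l' /\ forall x, g (h x) = x.
Proof.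
  induction l as [|h l IH]; intro Hb.
  - exists nil. split; intros ? [].
  - destruct IH as [l' [Hb' Hinv]]; [intros g Hg; apply Hb; right; exact Hg|].
    destruct (Hb h (or_introl eq_refl)) as [g [Hg1 Hg2]].
    exists (g :: l'). split.
    + intros k [<-|Hk]; [exists h; split; assumption|auto].
    + intros k [<-|Hk].
      * exists g. split; [left; reflexivity|exact Hg1].
      * destruct (Hinv k Hk) as [k' [Hk' Hk'k]]. exists k'. split; [right|]; auto.
Qed.

Lemma perm_coarseP (E : entourage nat) :
  perm_coarse E <-> exists l, bijections l /\ subrel E (E_of l).
Proof.
  split.
  - intros [F [[H [[[l Hl] [Hb _]] ->]] HEF]]. exists l. split.
    + intros h Hh. apply Hb, Hl, Hh.
    + intros x y Exy. destruct (HEF x y Exy) as [h [Hh ->]].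
      exists h. split; [apply Hl, Hh|reflexivity].
  - intros [l [Hb HE]]. exists (E_of ((fun x => x) :: l)). split.
    + exists (fun g => In g ((fun x => x) :: l)). split; [|reflexivity].
      split; [exists ((fun x => x) :: l); tauto|split; [|left; reflexivity]].
      intros h [<-|Hh]; [exact bijective_fun_id|auto].
    + intros x y Exy. destruct (HE x y Exy) as [h [Hh ->]].
      exists h. split; [right|]; auto.
Qed.

Lemma perm_coarse_E_of (l : list (nat -> nat)) :
  bijections l -> perm_coarse (E_of l).
Proof. intro Hb. apply perm_coarseP. exists l. split; [exact Hb|intros x y H; exact H]. Qed.

Lemma perm_coarse_structure : coarse_structure perm_coarse.
Proof.
  split; [|split; [|split; [|split]]].
  - apply perm_coarseP. exists ((fun x => x) :: nil). split.
    + intros h [<-|[]]. exact bijective_fun_id.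
    + intros x y ->. exists (fun x => x). split; [left|]; reflexivity.
  - intros E F HF HEF. apply perm_coarseP in HF as [l [Hb HFl]].
    apply perm_coarseP. exists l. split; [exact Hb|].
    intros x y Exy. apply HFl, HEF, Exy.
  - intros E HE. apply perm_coarseP in HE as [l [Hb HEl]].
    destruct (bijections_inverses l Hb) as [l' [Hb' Hinv]].
    apply perm_coarseP. exists l'. split; [exact Hb'|].
    intros x y Eyx. destruct (HEl y x Eyx) as [h [Hh ->]].
    destruct (Hinv h Hh) as [g [Hg Hgh]]. exists g. split; [exact Hg|symmetry; apply Hgh].
  - intros E F HE HF.
    apply perm_coarseP in HE as [l1 [Hb1 HE1]]. apply perm_coarseP in HF as [l2 [Hb2 HF2]].
    apply perm_coarseP. exists (l1 ++ l2). split.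
    + intros h Hh. apply in_app_or in Hh as [Hh|Hh]; auto.
    + intros x y [Exy|Fxy];
        [destruct (HE1 x y Exy) as [h [Hh ->]]|destruct (HF2 x y Fxy) as [h [Hh ->]]];
        exists h; split; auto; apply in_or_app; auto.
  - intros E F HE HF.
    apply perm_coarseP in HE as [l1 [Hb1 HE1]]. apply perm_coarseP in HF as [l2 [Hb2 HF2]].
    apply perm_coarseP.
    exists (flat_map (fun h1 => map (fun h2 x => h2 (h1 x)) l2) l1). split.
    + intros h Hh. apply in_flat_map in Hh as [h1 [H1 Hh]].
      apply in_map_iff in Hh as [h2 [<- H2]]. apply bijective_fun_comp; auto.
    + intros x z [y [Exy Fyz]].
      destruct (HE1 x y Exy) as [h1 [H1 ->]]. destruct (HF2 _ z Fyz) as [h2 [H2 ->]].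
      exists (fun x => h2 (h1 x)). split; [|reflexivity].
      apply in_flat_map. exists h1. split; [exact H1|].
      apply (in_map (fun h2 x => h2 (h1 x))), H2.
Qed.

Lemma E_of_ball_finite (l : list (nat -> nat)) (x : nat) : finite_set (E_of l x).
Proof.
  induction l as [|h l [m Hm]].
  - exists 0. intros y [g [[] _]].
  - exists (max m (S (h x))). intros y [g [[<-|Hg] ->]]; [lia|].
    assert (g x < m) by (apply Hm; exists g; split; auto). lia.
Qed.

Lemma E_of_coball_finite (l : list (nat -> nat)) (x : nat) :
  bijections l -> finite_set (fun z => E_of l z x).
Proof.
  induction l as [|h l IH]; intro Hb.
  - exists 0. intros z [g [[] _]].
  - destruct IH as [m Hm]; [intros g Hg; apply Hb; right; exact Hg|].
    destruct (Hb h (or_introl eq_refl)) as [h' [Hh' _]].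
    exists (max m (S (h' x))). intros z [g [[<-|Hg] Hx]].
    + rewrite Hx, Hh'. lia.
    + assert (z < m) by (apply Hm; exists g; split; auto). lia.
Qed.

Lemma perm_coarse_locally_finite (E : entourage nat) :
  perm_coarse E -> locally_finite E.
Proof.
  intro HE. apply perm_coarseP in HE as [l [Hb HEl]]. split; intro x.
  - destruct (E_of_ball_finite l x) as [m Hm]. exists m. intros y Hy. apply Hm, HEl, Hy.
  - destruct (E_of_coball_finite l x Hb) as [m Hm]. exists m. intros y Hy. apply Hm, HEl, Hy.
Qed.

Lemma E_of_interval_length (l : list (nat -> nat)) (x a k : nat) :
  (forall y, a <= y < a + k -> E_of l x y) -> k <= length l.
Proof.
  intro Hball.
  assert (Hincl : incl (seq a k) (map (fun h => h x) l)).
  { intros y Hy. apply in_seq in Hy. destruct (Hball y Hy) as [h [Hh ->]].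
    apply (in_map (fun h => h x)), Hh. }
  pose proof (NoDup_incl_length (seq_NoDup k a) Hincl) as Hlen.
  rewrite length_seq, length_map in Hlen. exact Hlen.
Qed.

Definition same_dyadic_block : entourage nat :=
  fun x y => Nat.log2 (S x) = Nat.log2 (S y).

Lemma lt_pow2_succ_log2 (y : nat) : y < 2 ^ S (Nat.log2 (S y)).
Proof. pose proof (Nat.log2_spec (S y) ltac:(lia)). lia. Qed.

Lemma same_dyadic_block_locally_finite : locally_finite same_dyadic_block.
Proof.
  split; intro x; exists (2 ^ S (Nat.log2 (S x))); intros y Hy;
    unfold same_dyadic_block in Hy; [rewrite Hy|rewrite <- Hy]; apply lt_pow2_succ_log2.
Qed.

Lemma same_dyadic_block_not_perm_coarse : ~ perm_coarse same_dyadic_block.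
Proof.
  intro HE. apply perm_coarseP in HE as [l [_ HEl]].
  set (m := length l).
  assert (Hm : m < 2 ^ m) by (apply Nat.pow_gt_lin_r; lia).
  enough (2 ^ m <= m) by lia.
  apply (E_of_interval_length l (2 ^ m - 1) (2 ^ m - 1)).
  intros y Hy. apply HEl. unfold same_dyadic_block.
  replace (S (2 ^ m - 1)) with (2 ^ m) by lia.
  rewrite Nat.log2_pow2 by lia. symmetry. apply Nat.log2_unique; simpl; lia.
Qed.

Lemma perm_coarse_not_maximal : ~ maximal perm_coarse.
Proof.
  intros [_ Hmax]. apply locally_finite_unbounded, Hmax.
  - exact locally_finite_coarse_structure.
  - split; [exact perm_coarse_locally_finite|].
    exists same_dyadic_block.
    split; [exact same_dyadic_block_locally_finite|exact same_dyadic_block_not_perm_coarse].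
Qed.

Definition transposition (a b z : nat) : nat :=
  if z =? a then b else if z =? b then a else z.

Lemma transposition_involutive (a b z : nat) :
  transposition a b (transposition a b z) = z.
Proof.
  unfold transposition.
  destruct (Nat.eqb_spec z a); [|destruct (Nat.eqb_spec z b)];
    repeat match goal with |- context [?x =? ?y] => destruct (Nat.eqb_spec x y) end; lia.
Qed.

Lemma finite_set_bounded (Y : nat -> Prop) : finite_set Y -> bounded perm_coarse Y.
Proof.
  intros [n Hn]. exists 0, (E_of (map (transposition 0) (seq 0 n))). split.
  - apply perm_coarse_E_of. intros h Hh. apply in_map_iff in Hh as [k [<- _]].
    exists (transposition 0 k). split; intro; apply transposition_involutive.
  - intros y Hy. exists (transposition 0 y). split.
    + apply in_map, in_seq. specialize (Hn y Hy). lia.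
    + reflexivity.
Qed.

Section SwapIntoSet.

Variables (A : nat -> Prop) (psi : nat -> nat).
Hypothesis psi_inj : forall i j, psi i = psi j -> i = j.
Hypothesis psi_in : forall n, A (psi n).

Definition swap_into (x : nat) : nat :=
  if excluded_middle_informative (A x) then
    if excluded_middle_informative (exists n, ~ A n /\ psi n = x)
    then epsilon (inhabits 0) (fun n => ~ A n /\ psi n = x)
    else x
  else psi x.

Lemma swap_into_psi (n : nat) : ~ A n -> swap_into (psi n) = n.
Proof.
  intro nAn. unfold swap_into.
  destruct (excluded_middle_informative (A (psi n))) as [_|nA]; [|contradiction (nA (psi_in n))].
  destruct (excluded_middle_informative _) as [Ex|nEx]; [|exfalso; eauto].
  destruct (epsilon_spec (inhabits 0) _ Ex) as [_ Heq]. apply psi_inj, Heq.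
Qed.

Lemma swap_into_outside (n : nat) : ~ A n -> swap_into n = psi n.
Proof.
  intro nAn. unfold swap_into.
  destruct (excluded_middle_informative (A n)); [contradiction|reflexivity].
Qed.

Lemma swap_into_involutive (x : nat) : swap_into (swap_into x) = x.
Proof.
  destruct (classic (A x)) as [Ax|nAx];
    [|rewrite (swap_into_outside x nAx); apply swap_into_psi, nAx].
  unfold swap_into at 2.
  destruct (excluded_middle_informative (A x)) as [_|]; [|contradiction].
  destruct (excluded_middle_informative _) as [Ex|nEx].
  - destruct (epsilon_spec (inhabits 0) _ Ex) as [nAn Hn].
    set (n := epsilon _ _) in *. rewrite swap_into_outside by exact nAn. exact Hn.
  - unfold swap_into.
    destruct (excluded_middle_informative (A x)) as [_|]; [|contradiction].
    destruct (excluded_middle_informative _); [contradiction|reflexivity].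
Qed.

Lemma large_of_injection : large perm_coarse A.
Proof.
  exists (E_of ((fun x => x) :: swap_into :: nil)). split.
  - apply perm_coarse_E_of. intros h [<-|[<-|[]]]; [exact bijective_fun_id|].
    exists swap_into. split; apply swap_into_involutive.
  - intro y. destruct (classic (A y)) as [Ay|nAy].
    + exists y. split; [exact Ay|]. exists (fun x => x). split; [left|]; reflexivity.
    + exists (psi y). split; [apply psi_in|].
      exists swap_into. split; [right; left; reflexivity|symmetry; apply swap_into_psi, nAy].
Qed.

End SwapIntoSet.

Lemma infinite_set_injection (A : nat -> Prop) :
  infinite_set A ->
  exists psi : nat -> nat, (forall i j, psi i = psi j -> i = j) /\ forall n, A (psi n).
Proof.
  intro HA.
  assert (Hnext : forall n, exists a, A a /\ n <= a).
  { intro n. apply NNPP. intro Hno. apply HA. exists n. intros x Ax.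
    apply Nat.nle_gt. intro Hnx. apply Hno. eauto. }
  destruct (choice _ Hnext) as [next Hspec].
  set (psi := fix psi k := match k with 0 => next 0 | S k => next (S (psi k)) end).
  assert (Hin : forall k, A (psi k)) by (intros [|k]; apply Hspec).
  assert (Hmono : forall i j, i < j -> psi i < psi j).
  { intros i j Hij. induction Hij as [|j _ IH]; simpl;
      [pose proof (proj2 (Hspec (S (psi i))))|pose proof (proj2 (Hspec (S (psi j))))]; lia. }
  exists psi. split; [|exact Hin].
  intros i j Hij. destruct (Nat.lt_trichotomy i j) as [Hlt|[Heq|Hgt]]; [| exact Heq|];
    [apply Hmono in Hlt|apply Hmono in Hgt]; lia.
Qed.

Lemma infinite_set_large (A : nat -> Prop) : infinite_set A -> large perm_coarse A.
Proof.
  intro HA. destruct (infinite_set_injection A HA) as [psi [Hinj Hin]].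
  exact (large_of_injection A psi Hinj Hin).
Qed.

Lemma perm_coarse_extremely_normal : extremely_normal perm_coarse.
Proof.
  split.
  - intro Hb. apply locally_finite_unbounded.
    destruct Hb as [x [E [HE Hall]]]. exists x, E. split; [|exact Hall].
    apply perm_coarse_locally_finite, HE.
  - intros Y HY. apply infinite_set_large. intro Hfin. apply HY, finite_set_bounded, Hfin.
Qed.

Theorem mainTheorem8 :
  coarse_structure perm_coarse /\
  extremely_normal perm_coarse /\
  (forall A : nat -> Prop, infinite_set A -> large perm_coarse A) /\
  strictly_contained perm_coarse M_omega /\
  ~ maximal perm_coarse.
Proof.
  split; [exact perm_coarse_structure|].
  split; [exact perm_coarse_extremely_normal|].
  split; [exact infinite_set_large|].
  split; [|exact perm_coarse_not_maximal].
  split.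
  - intros E HE. apply locally_finite_M_omega, perm_coarse_locally_finite, HE.
  - exists same_dyadic_block. split.
    + apply locally_finite_M_omega, same_dyadic_block_locally_finite.
    + exact same_dyadic_block_not_perm_coarse.
Qed.
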